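(* Let $M$ be a $3$-connected matroid with a $3$-connected minor $N$ where $|E(N)|\ge 4$. If $T$ is an $N$-grounded triangle of $M$ and $x\in T$, then $M/x$ does not have an $N$-minor.
   Context: ''Has an $N$-minor'' means has a minor isomorphic to $N$. A triangle $T$ of $M$ is $N$-grounded if for all distinct $a,b\in T$, none of $M/a/b$, $M/a\backslash b$, $M\backslash a/b$, $M\backslash a\backslash b$ has an $N$-minor. *)

From mathcomp Require Import all_boot.
Set Implicit Arguments. Unset Strict Implicit. Unset Printing Implicit Defensive.

Record mat (T : finType) := Mat { ground : {set T}; indep : pred {set T} }.

Definition is_matroid (T : finType) (M : mat T) : Prop :=
  [/\ indep M set0,
      forall I : {set T}, indep M I -> I \subset ground M,
      forall I J : {set T}, indep M J -> I \subset J -> indep M I &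
      forall I J : {set T}, indep M I -> indep M J -> #|I| < #|J| ->
        exists2 e, e \in J :\: I & indep M (e |: I)].

Definition rank (T : finType) (M : mat T) (X : {set T}) : nat :=
  \max_(I : {set T} | (I \subset X) && indep M I) #|I|.

Definition delete (T : finType) (M : mat T) (D : {set T}) : mat T :=
  Mat (ground M :\: D) (fun I => indep M I && (I \subset ground M :\: D)).

Definition contract (T : finType) (M : mat T) (C : {set T}) : mat T :=
  Mat (ground M :\: C)
      (fun I => (I \subset ground M :\: C) &&
         (rank M (I :|: (C :&: ground M)) == #|I| + rank M (C :&: ground M))).

Definition isomorphic (T T' : finType) (M : mat T) (N : mat T') : Prop :=
  exists f : T -> T',
    [/\ {in ground M &, injective f}, f @: ground M = ground N &
        forall I : {set T}, I \subset ground M -> indep M I = indep N (f @: I)].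

Definition has_minor (T T' : finType) (M : mat T) (N : mat T') : Prop :=
  exists C D : {set T},
    [/\ C \subset ground M, D \subset ground M, [disjoint C & D] &
        isomorphic (delete (contract M C) D) N].

(* Tutte connectivity: M is 3-connected if it has no k-separation, k < 3:
   no X ⊆ E with |X|,|E-X| >= k and r(X) + r(E-X) - r(M) < k. *)
Definition three_connected (T : finType) (M : mat T) : Prop :=
  forall (k : nat) (X : {set T}), 0 < k < 3 -> X \subset ground M ->
    k <= #|X| -> k <= #|ground M :\: X| ->
    rank M (ground M) + k <= rank M X + rank M (ground M :\: X).

Definition circuit (T : finType) (M : mat T) (C : {set T}) : Prop :=
  [/\ C \subset ground M, ~~ indep M C & forall e, e \in C -> indep M (C :\ e)].

Definition triangle (T : finType) (M : mat T) (Tr : {set T}) : Prop :=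
  circuit M Tr /\ #|Tr| = 3.

Definition grounded (T T' : finType) (M : mat T) (N : mat T') (Tr : {set T}) : Prop :=
  forall a b : T, a \in Tr -> b \in Tr -> a != b ->
    [/\ ~ has_minor (contract (contract M [set a]) [set b]) N,
        ~ has_minor (delete (contract M [set a]) [set b]) N,
        ~ has_minor (contract (delete M [set a]) [set b]) N &
        ~ has_minor (delete (delete M [set a]) [set b]) N].

(* Suppose M / x / C \ D is isomorphic to N, and let a, b be the other two
   elements of the triangle.  Groundedness forbids a or b to lie in C or D, so
   both survive in the minor.  There {a, b} is dependent, since the triangle is
   a circuit whose third element x has been contracted; its image in N is then a
   dependent pair, i.e. a 2-separation of N, impossible when N is 3-connected
   with at least four elements. *)
From mathcomp Require Import all_boot zify.
Set Implicit Arguments. Unset Strict Implicit. Unset Printing Implicit Defensive.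

Section Rank.
Variable T : finType.
Implicit Types (M : mat T) (X Y I J : {set T}).

Lemma card_indep_le_rank M I X : indep M I -> I \subset X -> #|I| <= rank M X.
Proof. by move=> HI HX; apply: (leq_bigmax_cond I); rewrite HX HI. Qed.

Lemma rank_attained M X : indep M set0 ->
  exists I, [/\ I \subset X, indep M I & #|I| = rank M X].
Proof.
move=> H0; rewrite /rank (bigmax_eq_arg set0) ?sub0set ?H0 //.
by case: arg_maxnP => [|I /andP[HIX HI] _]; [rewrite sub0set H0 | exists I].
Qed.

Lemma rankS M X Y : X \subset Y -> rank M X <= rank M Y.
Proof.
move=> HXY; apply/bigmax_leqP => I /andP[HIX HI].
exact: card_indep_le_rank HI (subset_trans HIX HXY).
Qed.

Lemma indep_extend M I X : is_matroid M -> indep M I -> I \subset X ->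
  exists J, [/\ I \subset J, J \subset X, indep M J & #|J| = rank M X].
Proof.
case=> H0 _ _ Haug.
move Hn: (rank M X - #|I|) => n.
elim: n I Hn => [|n IH] I Hn HI HIX.
  exists I; split=> //; apply/eqP; rewrite eqn_leq card_indep_le_rank //=.
  by move/eqP: Hn; rewrite subn_eq0.
have [K [HKX HK HKc]] := rank_attained X H0.
have ltIK : #|I| < #|K| by lia.
have [e] := Haug _ _ HI HK ltIK.
rewrite inE => /andP[eI eK] HeI.
have [||J [HeJ HJX HJ HJc]] := IH (e |: I) _ HeI.
- by rewrite cardsU1 eI add1n subnS Hn.
- by rewrite subUset sub1set (subsetP HKX) // HIX.
by exists J; split=> //; apply: subset_trans HeJ; apply: subsetUr.
Qed.

End Rank.

Section Minors.
Variable T : finType.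
Implicit Types (M : mat T) (X Y I C D S : {set T}).

Definition mat_eq M1 M2 :=
  ground M1 = ground M2 /\ forall I, indep M1 I = indep M2 I.

Lemma mat_eq_rank M1 M2 X : mat_eq M1 M2 -> rank M1 X = rank M2 X.
Proof. by case=> _ H; apply: eq_bigl => I; rewrite H. Qed.

Lemma mat_eq_sym M1 M2 : mat_eq M1 M2 -> mat_eq M2 M1.
Proof. by case=> H1 H2; split. Qed.

Lemma mat_eq_trans M1 M2 M3 : mat_eq M1 M2 -> mat_eq M2 M3 -> mat_eq M1 M3.
Proof. by case=> H1 H2 [H3 H4]; split=> [|I]; rewrite ?H1 ?H2. Qed.

Lemma mat_eq_contract M1 M2 C : mat_eq M1 M2 -> mat_eq (contract M1 C) (contract M2 C).
Proof.
by move=> H; have [Hg _] := H; split=> [|I]; rewrite /= Hg // !(mat_eq_rank _ H).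
Qed.

Lemma mat_eq_delete M1 M2 D : mat_eq M1 M2 -> mat_eq (delete M1 D) (delete M2 D).
Proof. by case=> Hg Hi; split=> [|I]; rewrite /= Hg ?Hi. Qed.

Lemma delete_delete M D1 D2 : mat_eq (delete (delete M D1) D2) (delete M (D1 :|: D2)).
Proof.
split=> [|I]; rewrite /= setDDl // -andbA; congr (_ && _).
case H: (I \subset ground M :\: (D1 :|: D2)); rewrite ?andbT ?andbF //.
by apply: subset_trans H _; rewrite setDS // subsetUl.
Qed.

Lemma rank_delete M D Y : Y \subset ground M :\: D -> rank (delete M D) Y = rank M Y.
Proof.
move=> HY; apply: eq_bigl => I /=.
by case HI: (I \subset Y); rewrite //= (subset_trans HI HY) andbT.
Qed.

Lemma contract_delete M C D : [disjoint C & D] ->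
  mat_eq (contract (delete M D) C) (delete (contract M C) D).
Proof.
move=> Hd.
have Esw : (ground M :\: D) :\: C = (ground M :\: C) :\: D by rewrite !setDDl setUC.
have HCD : C :&: ground M \subset ground M :\: D.
  by apply/subsetP=> e; rewrite !inE => /andP[eC ->]; rewrite (disjointFr Hd eC).
split=> [|I] /=; first exact: Esw.
have -> : C :&: (ground M :\: D) = C :&: ground M.
  by rewrite setIDA; apply/setDidPl; apply: disjointWl Hd; apply: subsetIl.
rewrite andbC -Esw.
case HI: (I \subset (ground M :\: D) :\: C); rewrite ?andbF //=.
have HID : I \subset ground M :\: D by apply: subset_trans HI (subsetDl _ _).
have HIC : I \subset ground M :\: C.
  by rewrite Esw in HI; apply: subset_trans HI (subsetDl _ _).
by rewrite HIC /= !rank_delete // ?subUset ?HID ?HCD // andbT.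
Qed.

Lemma rank_contract M C Y : is_matroid M -> Y \subset ground M :\: C ->
  rank (contract M C) Y + rank M (C :&: ground M) = rank M (Y :|: (C :&: ground M)).
Proof.
move=> Hm HY; have [H0 _ Hdown _] := Hm.
set C0 := C :&: ground M.
apply/eqP; rewrite eqn_leq; apply/andP; split.
  have H0c : indep (contract M C) set0 by rewrite /= sub0set set0U cards0 eqxx.
  have [J [HJY /andP[_ /eqP HJr] <-]] := rank_attained Y H0c.
  by rewrite -HJr; apply: rankS; apply: setSU.
have [B [HBC HB HBc]] := rank_attained C0 H0.
have [J' [HBJ HJY HJ HJc]] := indep_extend Hm HB (subset_trans HBC (subsetUr Y _)).
set J := J' :\: C0.
have h1 : #|J' :&: C0| <= rank M C0.
  by apply: card_indep_le_rank; [apply: Hdown HJ _; apply: subsetIl | apply: subsetIr].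
have h2 : #|B| <= #|J' :&: C0| by apply: subset_leq_card; rewrite subsetI HBJ HBC.
have h3 := cardsID C0 J'; rewrite -/J in h3.
have HJY' : J \subset Y.
  apply/subsetP=> e; rewrite inE => /andP[eC eJ].
  by move: (subsetP HJY e eJ); rewrite inE (negbTE eC) orbF.
have h4 : rank M (J :|: C0) <= rank M (Y :|: C0) by apply: rankS; apply: setSU.
have h5 : #|J'| <= rank M (J :|: C0).
  apply: card_indep_le_rank => //; apply/subsetP=> e eJ.
  by rewrite /J in_setU in_setD eJ andbT orNb.
have HJind : indep (contract M C) J.
  by rewrite /= (subset_trans HJY' HY) -/C0; apply/eqP; lia.
have := card_indep_le_rank HJind HJY'; lia.
Qed.

Lemma contract_contract M C1 C2 : is_matroid M ->
  mat_eq (contract (contract M C1) C2) (contract M (C1 :|: C2)).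
Proof.
move=> Hm; split=> [|I] /=; rewrite setDDl //.
case HI: (I \subset ground M :\: (C1 :|: C2)) => //=.
have HIC1 : I \subset ground M :\: C1.
  by apply: subset_trans HI _; rewrite setDS // subsetUl.
have HC2 : C2 :&: (ground M :\: C1) \subset ground M :\: C1 by rewrite subsetIr.
have HIC2 : I :|: C2 :&: (ground M :\: C1) \subset ground M :\: C1.
  by rewrite subUset HIC1 HC2.
have E1 := rank_contract Hm HIC2.
have E2 := rank_contract Hm HC2.
have S1 : I :|: C2 :&: (ground M :\: C1) :|: C1 :&: ground M
          = I :|: (C1 :|: C2) :&: ground M.
  by apply/setP=> e; rewrite !inE; do 4!case: (_ \in _).
have S2 : C2 :&: (ground M :\: C1) :|: C1 :&: ground M = (C1 :|: C2) :&: ground M.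
  by apply/setP=> e; rewrite !inE; do 3!case: (_ \in _).
rewrite S1 in E1; rewrite S2 in E2.
rewrite -E1 -E2; fold (contract M C1); apply/eqP/eqP => h; lia.
Qed.

Lemma contract_circuit_dep M C S Tr a : is_matroid M -> circuit M Tr ->
  a \in Tr -> a \in S -> Tr \subset S :|: C -> ~~ indep (contract M C) S.
Proof.
move=> Hm [HTE HTd HTi] aT aS HTS; have [_ _ Hdown _] := Hm.
set C0 := C :&: ground M.
rewrite /= negb_and -/C0; apply/orP; right; apply/negP => /eqP HSr.
have HX : Tr :\ a \subset S :|: C0.
  apply/subsetP=> e /setD1P[_ eT]; move: (subsetP HTS e eT) (subsetP HTE e eT).
  by rewrite !inE => /orP[->|->] ->; rewrite ?orbT.
have [K [HaK HKX HK HKc]] := indep_extend Hm (HTi a aT) HX.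
have aK : a \notin K.
  apply: contra HTd => aK; apply: Hdown HK _; apply/subsetP=> e eT.
  by case: (e =P a) => [->//|/eqP ne]; apply: (subsetP HaK); rewrite !inE ne.
have HKs : K \subset (S :\ a) :|: (K :&: C0).
  apply/subsetP=> e eK; move: (subsetP HKX e eK); rewrite !inE eK /=.
  by case: (e =P a) => [ea|//]; move: aK; rewrite -ea eK.
have hK := subset_leq_card HKs; rewrite cardsU in hK.
have hC0 : #|K :&: C0| <= rank M C0.
  by apply: card_indep_le_rank; [apply: Hdown HK _; apply: subsetIl | apply: subsetIr].
have hS := cardsD1 a S; rewrite aS in hS.
lia.
Qed.

End Minors.

Lemma isomorphic_mat_eq (T T' : finType) (M1 M2 : mat T) (N : mat T') :
  mat_eq M1 M2 -> isomorphic M1 N -> isomorphic M2 N.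
Proof.
case=> Hg Hi [f [Hinj Him Hind]]; exists f; rewrite -Hg; split=> // I HI.
by rewrite -Hi Hind.
Qed.

Lemma three_connected_pair_indep (T : finType) (N : mat T) u v :
  three_connected N -> 4 <= #|ground N| -> u \in ground N -> v \in ground N ->
  u != v -> indep N [set u; v].
Proof.
move=> HNc HN4 uN vN uv; apply: contraT => Hd.
have HX : [set u; v] \subset ground N by apply/subsetP=> e /set2P[]->.
have c2 : #|[set u; v]| = 2 by rewrite cards2 uv.
have cD : #|ground N :\: [set u; v]| = #|ground N| - 2.
  by rewrite cardsD (setIidPr HX) c2.
have r1 : rank N [set u; v] <= 1.
  apply/bigmax_leqP => I /andP[HIX HI].
  case: (I =P [set u; v]) => [E|/eqP ne]; first by move: Hd; rewrite -E HI.
  have HIp : I \proper [set u; v] by rewrite properEneq ne HIX.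
  by have := proper_card HIp; rewrite c2.
have r2 : rank N (ground N :\: [set u; v]) <= rank N (ground N) by apply/rankS/subsetDl.
have := HNc 2 [set u; v] erefl HX; rewrite c2 cD => /(_ erefl); lia.
Qed.

Lemma isomorphic_indep_pair (T T' : finType) (M : mat T) (N : mat T') a b :
  isomorphic M N -> three_connected N -> 4 <= #|ground N| ->
  a \in ground M -> b \in ground M -> a != b -> indep M [set a; b].
Proof.
move=> [f [Hinj Him Hind]] HNc HN4 aM bM ab.
rewrite Hind; last by apply/subsetP=> e /set2P[]->.
rewrite imsetU1 imset_set1; apply: three_connected_pair_indep => //.
- by rewrite -Him imset_f.
- by rewrite -Him imset_f.
by apply: contra ab => /eqP/Hinj->.
Qed.

Lemma has_minor_delete1 (T T' : finType) (M : mat T) (N : mat T')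
    (C D : {set T}) (y : T) :
  C \subset ground M -> D \subset ground M -> [disjoint C & D] ->
  isomorphic (delete (contract M C) D) N -> y \in D -> has_minor (delete M [set y]) N.
Proof.
move=> HC HD HCD Hiso yD.
have yC : y \notin C by rewrite (disjointFl HCD yD).
exists C, (D :\ y); split.
- by rewrite /= subsetD HC disjoint_sym disjoints1.
- by rewrite /= setSD.
- by apply: disjointWr HCD; apply: subsetDl.
apply: isomorphic_mat_eq Hiso; apply: mat_eq_sym.
apply: mat_eq_trans (mat_eq_delete _ (contract_delete _ _)) _.
  by rewrite disjoint_sym disjoints1.
by apply: mat_eq_trans (delete_delete _ _ _) _; rewrite setD1K.
Qed.

Lemma has_minor_contract1 (T T' : finType) (M : mat T) (N : mat T')
    (X C D : {set T}) (y : T) :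
  is_matroid M -> C \subset ground M :\: X -> D \subset ground M :\: X ->
  [disjoint C & D] -> isomorphic (delete (contract (contract M X) C) D) N ->
  y \in C -> has_minor (contract (contract M X) [set y]) N.
Proof.
move=> Hm HC HD HCD Hiso yC.
exists (C :\ y), D; split.
- by rewrite /= setSD.
- by rewrite /= subsetD HD disjoint_sym disjoints1 (disjointFr HCD yC).
- by apply: disjointWl HCD; apply: subsetDl.
apply: isomorphic_mat_eq Hiso; apply: mat_eq_delete.
apply: mat_eq_trans (contract_contract _ _ Hm) _.
apply: mat_eq_sym; apply: mat_eq_trans (mat_eq_contract _ (contract_contract _ _ Hm)) _.
apply: mat_eq_trans (contract_contract _ _ Hm) _.
by rewrite -setUA setD1K.
Qed.

Theorem lemma3p1 (T T' : finType) (M : mat T) (N : mat T') :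
  is_matroid M -> is_matroid N ->
  three_connected M -> three_connected N ->
  has_minor M N -> 4 <= #|ground N| ->
  forall (Tr : {set T}), triangle M Tr -> grounded M N Tr ->
  forall x, x \in Tr -> ~ has_minor (contract M [set x]) N.
Proof.
move=> Hm _ _ HNc _ HN4 Tr [HTc HT3] Hg x xT [C [D [HC HD HCD Hiso]]].
have HTE : Tr \subset ground M by case: HTc.
have /cards2P[a [b [ab Hab]]] : #|Tr :\ x| == 2
  by move: HT3; rewrite (cardsD1 x) xT add1n => -[->].
have /setD1P[ax aT] : a \in Tr :\ x by rewrite Hab !inE eqxx.
have /setD1P[bx bT] : b \in Tr :\ x by rewrite Hab !inE eqxx orbT.
have survives y :
    y \in Tr -> y != x -> y \in ground (delete (contract (contract M [set x]) C) D).
  move=> yT yx; have xy : x != y by rewrite eq_sym.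
  have [HyC HyD _ _] := Hg x y xT yT xy.
  rewrite !inE yx (subsetP HTE y yT) !andbT.
  apply/andP; split; apply/negP.
  - by move=> yD; apply: HyD (has_minor_delete1 HC HD HCD Hiso yD).
  - by move=> yC; apply: HyC (has_minor_contract1 Hm HC HD HCD Hiso yC).
have HTab : Tr \subset [set a; b] :|: ([set x] :|: C).
  apply/subsetP=> e eT; case: (e =P x) => [->|/eqP ex]; first by rewrite !inE eqxx orbT.
  have : e \in Tr :\ x by rewrite !inE ex eT.
  by rewrite Hab !inE => ->.
have := contract_circuit_dep Hm HTc aT (setU11 _ _) HTab.
rewrite -(contract_contract _ _ Hm).2 => /negP; apply.
have := isomorphic_indep_pair Hiso HNc HN4 (survives _ aT ax) (survives _ bT bx) ab.
by case/andP.
Qed.
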